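(* Let $m/n\in(0,1/2)$. Then the set $\mathcal A_{m/n}$ of $m/n$-admissible integers has the same cardinality as the left Farey sequence $\mathrm{LFS}(m/n)$.
   Context: Rationals in lowest terms. For $h/k\in(0,1/2)$, $\mathrm{LFP}(h/k)$ is the element immediately preceding $h/k$ in the increasing list of rationals in $[0,1/2]$ with denominator at most $k$. $\mathrm{LFS}(m/n)=(0=u_1/v_1,u_2/v_2,\dots,u_\alpha/v_\alpha)$ where $u_\alpha/v_\alpha=\mathrm{LFP}(m/n)$ and $u_i/v_i=\mathrm{LFP}(u_{i+1}/v_{i+1})$ for $1\le i<\alpha$. $+_n$ is addition mod $n$; $\mathcal O_{m/n}[r,s]=\{r+_njm\colon0\le j\le K\}$ with $K\ge0$ least such that $r+_nKm=s$. An integer $k\in[0,m-1]$ is $m/n$-admissible if $\{k+1,\dots,m-1\}\cap\mathcal O_{m/n}[k,0]=\emptyset$. *)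

From HB Require Import structures.
From mathcomp Require Import all_boot all_order all_algebra.
Set Implicit Arguments. Unset Strict Implicit. Unset Printing Implicit Defensive.
Import Order.TTheory GRing.Theory Num.Theory.
Local Open Scope ring_scope.

(* All fractions a/b with 1 <= b <= k and 0 <= a <= b, restricted to [0,1/2].
   These are exactly the rationals in [0,1/2] with (reduced) denominator <= k. *)
Definition farey_cands (k : nat) : seq rat :=
  [seq r <- [seq (a%:R / b%:R : rat) | b <- iota 1 k, a <- iota 0 b.+1]
   | r <= 2%:R^-1].

(* LFP(q): the largest rational in [0,1/2] with denominator at most denq q
   which is strictly smaller than q (0 is always a candidate when q > 0). *)
Definition LFP (q : rat) : rat :=
  \big[Order.max/0]_(r <- farey_cands `|denq q|%N | r < q) r.

(* s = (u_1, ..., u_alpha) is the left Farey sequence LFS(q):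
   u_1 = 0, u_alpha = LFP(q), u_i = LFP(u_{i+1}), and the chain stops at
   the first 0 (u_i <> 0 for i > 1). Indices are 0-based here. *)
Definition is_LFS (q : rat) (s : seq rat) : Prop :=
  [/\ (0 < size s)%N,
      s`_0 = 0,
      last 0 s = LFP q,
      (forall i, (0 < i < size s)%N -> s`_i != 0)
    & (forall i, (i.+1 < size s)%N -> s`_i = LFP s`_i.+1)].

(* x \in O_{m/n}[r,0]: x = r +_n j m for some j <= K, where K is the least
   index with r +_n K m = 0; i.e. no earlier index i < j hits 0. *)
Definition in_orbit_to0 (m n r x : nat) : Prop :=
  exists j : nat, x = ((r + j * m) %% n)%N /\
    (forall i : nat, (i < j)%N -> ((r + i * m) %% n)%N <> 0%N).

Definition admissible (m n k : nat) : Prop :=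
  (k < m)%N /\
  (forall x : nat, (k < x < m)%N -> ~ in_orbit_to0 m n k x).

From mathcomp Require Import all_boot all_order all_algebra zify.
Import Order.TTheory GRing.Theory Num.Theory.

Set Implicit Arguments.
Unset Strict Implicit.
Unset Printing Implicit Defensive.

(* Since gcd(m, n) = 1, every k < m is k = u n mod m for a unique u < m, and the
   part of the m/n-orbit of k before it reaches 0 meets [0, m) exactly in the
   residues v n mod m with v <= u.  Hence k is admissible iff u is a record
   (left-to-right maximum) of u |-> u n mod m.  If LFP(m/n) = a/b, i.e.
   m b - a n = 1, then for u < a the residues u n mod m and u b mod a are
   ordered alike, u = a is a record (a n = -1 mod m) and no u > a is one; so
   the number of records exceeds that of a/b by one, just as LFS(m/n) is
   LFS(a/b) followed by a/b. *)

Section Residues.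

Variables m n : nat.
Hypothesis coprime_mn : coprime m n.

Lemma modn_mul_inj u v : u < m -> v < m -> u * n %% m = v * n %% m -> u = v.
Proof.
wlog le_vu : u v / v <= u => [W hu hv E|hu hv /eqP E].
  by case: (leqP v u) => [|/ltnW] le; [exact: W | apply/esym/W].
rewrite eqn_mod_dvd ?leq_mul2r ?le_vu ?orbT // -mulnBl Gauss_dvdl // in E.
case: (posnP (u - v)) => [z | /dvdn_leq/(_ E) le]; lia.
Qed.

Lemma modn_mul_surj k : k < m -> exists2 u, u < m & u * n %% m = k.
Proof.
move=> lt_km.
have uniq_res : uniq [seq u * n %% m | u <- iota 0 m].
  rewrite map_inj_in_uniq ?iota_uniq // => u v; rewrite !mem_iota.
  exact: modn_mul_inj.
have sub_res : {subset [seq u * n %% m | u <- iota 0 m] <= iota 0 m}.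
  by move=> _ /mapP [u _ ->]; rewrite mem_iota ltn_pmod //; lia.
have [_ eq_res] := uniq_min_size uniq_res sub_res (eq_leq (esym (size_map _ _))).
have : k \in iota 0 m by rewrite mem_iota.
by rewrite -eq_res => /mapP [u]; rewrite mem_iota => ? ->; exists u.
Qed.

Lemma modn_mul_ge u t : u < m -> t * n %% m = u * n %% m -> u <= t.
Proof.
move=> lt_um E; rewrite leqNgt; apply/negP => lt_tu.
by have := modn_mul_inj (ltn_trans lt_tu lt_um) lt_um E; lia.
Qed.

End Residues.

Definition mod_record (m n u : nat) : bool :=
  all (fun v => v * n %% m < u * n %% m) (iota 0 u).

Section Orbit.

Variables m n u : nat.
Hypotheses (coprime_mn : coprime m n) (lt_mn : m < n) (lt_um : u < m).
Let k := u * n %% m.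

Lemma orbit_zero_ge i : (k + i * m) %% n = 0 -> u * n <= k + i * m.
Proof.
move=> zero_i; set s := (k + i * m) %/ n.
have def_s : k + i * m = s * n by rewrite {1}(divn_eq (k + i * m) n) zero_i addn0.
have : s * n %% m = k by rewrite -def_s addnC modnMDl modn_mod.
move/(modn_mul_ge coprime_mn lt_um) => le_us.
by rewrite def_s leq_mul2r le_us orbT.
Qed.

Lemma in_orbit_to0_residue x : x < m ->
  in_orbit_to0 m n k x <-> exists2 v, v <= u & x = v * n %% m.
Proof.
move=> lt_xm; have def_k : k + (u * n %/ m) * m = u * n by rewrite addnC -divn_eq.
split=> [[j [def_x before_j]] | [v le_vu def_x]].
- set t := (k + j * m) %/ n.
  have def_t : k + j * m = t * n + x by rewrite def_x -divn_eq.
  (* Otherwise the orbit already hit 0 at the earlier index u n %/ m (see def_k). *)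
  have le_tu : t <= u.
    rewrite leqNgt; apply/negP => lt_ut.
    have : u.+1 * n <= t * n by rewrite leq_mul2r lt_ut orbT.
    rewrite mulSn => le_t; apply: (before_j (u * n %/ m)); last first.
      by rewrite def_k modnMl.
    by rewrite -(ltn_pmul2r (leq_ltn_trans (leq0n u) lt_um)); lia.
  exists (u - t); first exact: leq_subr.
  have : j * m + (u - t) * n = (u * n %/ m) * m + x.
    have : t * n <= u * n by rewrite leq_mul2r le_tu orbT.
    rewrite mulnBl; lia.
  by move=> e; rewrite -(modnMDl j) e modnMDl modn_small.
- set t := u - v.
  have res_k : (t * n + x) %% m = k.
    by rewrite def_x modnDmr -mulnDl subnK.
  set j := (t * n + x) %/ m.
  have def_j : k + j * m = t * n + x.
    by rewrite addnC {1}(divn_eq (t * n + x) m) res_k.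
  exists j; split=> [|i lt_ij /orbit_zero_ge le_ui].
    by rewrite def_j modnMDl modn_small //; lia.
  have : i * m < j * m by rewrite ltn_pmul2r //; lia.
  have : x <= v * n by rewrite def_x leq_mod.
  have : t * n + v * n = u * n by rewrite -mulnDl subnK.
  lia.
Qed.

Lemma admissible_mod_record : admissible m n k <-> mod_record m n u.
Proof.
have lt_km : k < m by rewrite ltn_pmod //; lia.
split=> [[_ adm] | rec].
- apply/allP => v; rewrite mem_iota add0n => /= lt_vu.
  have lt_vm := ltn_trans lt_vu lt_um.
  rewrite ltn_neqAle; apply/andP; split.
    by apply/eqP => /(modn_mul_inj coprime_mn lt_vm lt_um); lia.
  rewrite leqNgt; apply/negP => lt_kv; apply: (adm (v * n %% m)).
    by rewrite lt_kv ltn_pmod //; lia.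
  by apply/in_orbit_to0_residue; [rewrite ltn_pmod; lia | exists v; [lia|]].
- split=> // x /andP [lt_kx lt_xm] /(in_orbit_to0_residue lt_xm) [v].
  rewrite leq_eqVlt => /orP [/eqP -> | lt_vu] def_x; first by rewrite def_x ltnn in lt_kx.
  move/allP: rec => /(_ v); rewrite mem_iota add0n lt_vu -def_x => /(_ isT).
  by rewrite ltnNge ltnW.
Qed.

End Orbit.

Lemma coprime_of_bezout m n a b : m * b = a * n + 1 -> coprime a b.
Proof.
move=> E; rewrite coprime_sym; apply/coprimeP; first by nia.
by exists (m, n) => /=; lia.
Qed.

Section FareyParent.

Variables m n a b : nat.
Hypotheses (m_gt0 : 0 < m) (coprime_mn : coprime m n) (lt_am : a < m).
Hypothesis bezout : m * b = a * n + 1.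

(* Multiply m b = a n + 1 by u and reduce modulo m and modulo a. *)
Lemma farey_mod_identity u : u < a ->
  a * (u * n %% m) + u = m * (u * b %% a).
Proof.
move=> lt_ua; have a_gt0 : 0 < a by lia.
have def_un := divn_eq (u * n) m; have def_ub := divn_eq (u * b) a.
have lt_r : u * n %% m < m by rewrite ltn_pmod.
have lt_s : u * b %% a < a by rewrite ltn_pmod.
move: def_un def_ub lt_r lt_s.
set R := u * n %% m; set Q := u * n %/ m; set r := u * b %% a; set q := u * b %/ a.
move=> def_un def_ub lt_r lt_s.
have : m * (u * b) = u * (a * n) + u by rewrite mulnCA bezout; lia.
rewrite def_ub mulnCA def_un => E.
have eq_Qq : Q = q by case: (ltngtP Q q) => // [lt_Qq | lt_qQ]; nia.
nia.
Qed.

Lemma mod_record_farey u : u < a -> mod_record m n u = mod_record a b u.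
Proof.
move=> lt_ua; apply: eq_in_all => v; rewrite mem_iota add0n => /= lt_vu.
have lt_va := ltn_trans lt_vu lt_ua.
have id_u := farey_mod_identity lt_ua; have id_v := farey_mod_identity lt_va.
have : v * b %% a != u * b %% a.
  apply/eqP => /(modn_mul_inj (coprime_of_bezout bezout) lt_va lt_ua); lia.
case: (ltngtP (v * b %% a) (u * b %% a)) => // lt_res _.
- have : m * (v * b %% a).+1 <= m * (u * b %% a) by rewrite leq_mul2l lt_res orbT.
  rewrite mulnS => le_m; have : a * (v * n %% m) < a * (u * n %% m) by lia.
  by rewrite ltn_pmul2l //; lia.
- have : m * (u * b %% a).+1 <= m * (v * b %% a) by rewrite leq_mul2l lt_res orbT.
  rewrite mulnS => le_m; have : a * (u * n %% m) < a * (v * n %% m) by lia.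
  by rewrite ltn_pmul2l //; lia.
Qed.

Lemma count_mod_record_farey :
  count (mod_record m n) (iota 0 m) = (count (mod_record a b) (iota 0 a)).+1.
Proof.
have res_a : a * n %% m = m.-1.
  have b_gt0 : 0 < b by move: bezout; case: b => //; rewrite muln0 addn1.
  have mb : m * b = b.-1 * m + m by rewrite -{1}(prednK b_gt0) mulnS addnC mulnC.
  have -> : a * n = b.-1 * m + m.-1 by lia.
  by rewrite modnMDl modn_small //; lia.
have res_lt v : v < m -> v != a -> v * n %% m < m.-1.
  move=> lt_vm ne_va; have : v * n %% m < m by rewrite ltn_pmod.
  have : v * n %% m != m.-1.
    by rewrite -res_a; apply: contra ne_va => /eqP /(modn_mul_inj coprime_mn lt_vm lt_am) ->.
  lia.
have -> : iota 0 m = iota 0 a ++ a :: iota a.+1 (m - a.+1).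
  by rewrite -[in LHS](subnKC (ltnW lt_am)) -(subnSK lt_am) iotaD.
rewrite count_cat /= (@eq_in_count _ _ (mod_record a b)); last first.
  by move=> u; rewrite mem_iota => /= /mod_record_farey.
have -> : mod_record m n a.
  by apply/allP => v; rewrite mem_iota res_a => /= lt_va; apply: res_lt; lia.
rewrite (@eq_in_count _ _ pred0 (iota a.+1 _)) ?count_pred0 ?addn0 ?addn1 // => u.
rewrite mem_iota => /andP [lt_au lt_um]; apply/negbTE/allPn; exists a.
  by rewrite mem_iota; lia.
have : u * n %% m < m by rewrite ltn_pmod.
rewrite res_a -leqNgt; lia.
Qed.

End FareyParent.

Lemma farey_parent m n : 0 < m -> coprime m n -> 2 * m < n ->
  exists a b, [/\ a < m, m * b = a * n + 1, b <= n & 2 * a < b].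
Proof.
move=> m_gt0 coprime_mn lt_2mn.
have [a lt_am res_a] : exists2 a, a < m & a * n %% m = m.-1.
  by apply: modn_mul_surj; rewrite ?ltn_predL.
have bezout : m * (a * n %/ m).+1 = a * n + 1.
  by have := divn_eq (a * n) m; rewrite res_a; lia.
exists a, (a * n %/ m).+1; split=> //.
- rewrite -(leq_pmul2l m_gt0) bezout.
  have : a * n <= m.-1 * n by rewrite leq_mul2r; lia.
  have : m * n = m.-1 * n + n by rewrite -{1}(prednK m_gt0) mulSn addnC.
  lia.
- rewrite -(ltn_pmul2l m_gt0) bezout.
  have : a * (2 * m) <= a * n by rewrite leq_mul2l; lia.
  lia.
Qed.

Lemma denq_frac m n : coprime m n -> 0 < n -> `|denq (m%:R / n%:R : rat)%R|%N = n.
Proof.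
move=> coprime_mn n_gt0.
have := @coprimeq_den (Posz m) (Posz n); rewrite !absz_nat => /(_ coprime_mn) ->.
by case: eqP => [[n0]|_]; [rewrite n0 in n_gt0 | rewrite absz_nat].
Qed.

Lemma ltr_frac c d m n : 0 < d -> 0 < n ->
  ((c%:R / d%:R : rat) < m%:R / n%:R)%R = (c * n < m * d).
Proof.
move=> d_gt0 n_gt0.
by rewrite ltr_pdivrMr ?ltr0n // mulrAC ltr_pdivlMr ?ltr0n // -!natrM ltr_nat.
Qed.

Lemma ler_frac c d m n : 0 < d -> 0 < n ->
  ((c%:R / d%:R : rat) <= m%:R / n%:R)%R = (c * n <= m * d).
Proof.
move=> d_gt0 n_gt0.
by rewrite ler_pdivrMr ?ltr0n // mulrAC ler_pdivlMr ?ltr0n // -!natrM ler_nat.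
Qed.

Lemma farey_pred_le a b c d m n : 0 < d -> 0 < b -> d <= n ->
  m * b = a * n + 1 -> c * n < m * d -> c * b <= a * d.
Proof.
move=> d_gt0 b_gt0 le_dn bezout lt_cm; rewrite leqNgt; apply/negP => lt_ac.
have : n * (a * d).+1 <= n * (c * b) by rewrite leq_mul2l lt_ac orbT.
have : b * (c * n).+1 <= b * (m * d) by rewrite leq_mul2l lt_cm orbT.
have : b * (m * d) = (a * n + 1) * d by rewrite mulnCA mulnA bezout.
rewrite !mulnS; nia.
Qed.

Lemma LFP_farey m n a b : coprime m n -> 0 < b -> b <= n -> 2 * a < b ->
  m * b = a * n + 1 -> LFP (m%:R / n%:R)%R = (a%:R / b%:R)%R.
Proof.
move=> coprime_mn b_gt0 le_bn lt_2ab bezout.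
have n_gt0 : 0 < n by lia.
rewrite /LFP denq_frac //; apply/le_anti/andP; split.
  rewrite big_seq_cond; apply: bigmax_le => [|r /andP []].
    by rewrite divr_ge0 ?ler0n.
  rewrite mem_filter => /andP [_ /allpairsPdep [d [c [+ + ->]]]].
  rewrite !mem_iota => /andP [d_gt0 le_dn] _.
  by rewrite ltr_frac // ler_frac //; apply: farey_pred_le.
apply: le_bigmax_seq; last by rewrite ltr_frac //; lia.
rewrite mem_filter; apply/andP; split.
  have -> : (2%:R^-1 : rat) = (1%:R / 2%:R)%R by rewrite div1r.
  by rewrite ler_frac //; lia.
by apply/allpairsPdep; exists b, a; rewrite !mem_iota; split=> //; lia.
Qed.

Lemma is_LFS_zero q : LFP q = 0%R -> is_LFS q [:: 0%R].
Proof. by move=> LFPq; split=> // [] [|i]. Qed.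

Lemma is_LFS_rcons q p s :
  is_LFS p s -> p != 0%R -> LFP q = p -> is_LFS q (rcons s p).
Proof.
case=> size_s s0 last_s nz_s chain_s nz_p LFPq.
split; rewrite ?size_rcons ?last_rcons //.
- by rewrite nth_rcons size_s.
- move=> i /andP [i_gt0]; rewrite nth_rcons ltnS leq_eqVlt => /orP [/eqP -> | lt_is].
    by rewrite ltnn eqxx.
  by rewrite lt_is; apply: nz_s; rewrite i_gt0.
- move=> i; rewrite ltnS => lt_is; rewrite nth_rcons lt_is nth_rcons.
  case: (ltngtP i.+1 (size s)) => [lt_Si | lt_sS | eq_Si]; first exact: chain_s.
    by rewrite ltnNge lt_is in lt_sS.
  by rewrite -last_s -nth_last -eq_Si.
Qed.

Lemma LFS_size_count_mod_record m n : 0 < m -> coprime m n -> 2 * m < n ->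
  exists2 s, is_LFS (m%:R / n%:R)%R s & size s = count (mod_record m n) (iota 0 m).
Proof.
elim/ltn_ind: m n => m IH n m_gt0 coprime_mn lt_2mn.
have [a [b [lt_am bezout le_bn lt_2ab]]] := farey_parent m_gt0 coprime_mn lt_2mn.
have LFP_mn := LFP_farey coprime_mn (leq_ltn_trans (leq0n _) lt_2ab) le_bn lt_2ab bezout.
rewrite (count_mod_record_farey m_gt0 coprime_mn lt_am bezout).
have [a0 | a_gt0] := posnP a.
  by exists [:: 0%R]; rewrite ?a0 //; apply: is_LFS_zero; rewrite LFP_mn a0 mul0r.
have [s LFS_s size_s] := IH a lt_am b a_gt0 (coprime_of_bezout bezout) lt_2ab.
exists (rcons s (a%:R / b%:R)%R); last by rewrite size_rcons size_s.
apply: is_LFS_rcons LFP_mn => //.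
by rewrite mulf_neq0 // ?invr_eq0 pnatr_eq0 -lt0n // (leq_ltn_trans (leq0n _) lt_2ab).
Qed.

Lemma admissible_enum m n : coprime m n -> m < n ->
  exists A : seq nat, [/\ uniq A, forall k, k \in A <-> admissible m n k
    & size A = count (mod_record m n) (iota 0 m)].
Proof.
move=> coprime_mn lt_mn.
exists [seq u * n %% m | u <- iota 0 m & mod_record m n u]; split.
- rewrite map_inj_in_uniq ?filter_uniq ?iota_uniq // => u v.
  rewrite !mem_filter !mem_iota => /andP [_ lt_um] /andP [_ lt_vm].
  exact: modn_mul_inj.
- move=> k; split=> [/mapP [u] | adm_k].
    rewrite mem_filter mem_iota => /andP [rec_u lt_um] ->.
    exact/(admissible_mod_record coprime_mn lt_mn lt_um).
  have [u lt_um def_k] := modn_mul_surj coprime_mn (proj1 adm_k).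
  rewrite -def_k in adm_k *; apply: map_f.
  rewrite mem_filter mem_iota /= lt_um andbT.
  exact/(admissible_mod_record coprime_mn lt_mn lt_um).
- by rewrite size_map size_filter.
Qed.

Theorem corollary2p20 (m n : nat) :
  (0 < m)%N -> coprime m n -> (2 * m < n)%N ->
  exists s : seq rat,
    is_LFS ((m%:R / n%:R)%R) s /\
    exists A : seq nat,
      [/\ uniq A, (forall k : nat, k \in A <-> admissible m n k)
        & size A = size s].
Proof.
move=> m_gt0 coprime_mn lt_2mn.
have [s LFS_s size_s] := LFS_size_count_mod_record m_gt0 coprime_mn lt_2mn.
have lt_mn : m < n by apply: leq_ltn_trans lt_2mn; rewrite leq_pmull.
have [A [uniq_A adm_A size_A]] := admissible_enum coprime_mn lt_mn.
by exists s; split=> //; exists A; rewrite size_s.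
Qed.
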